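(* Let $\delta>0$. There exist an integer $N$ and a real $\kappa>0$ such that for all $c\ge0$ and all integers $n\ge\max(N,\kappa c)$, $$\lambda_n(c)\le e^{-\delta(n-\kappa c)} .$$
   Context: For $c>0$, $\lambda_n(c)$, $n\ge0$, are the eigenvalues, arranged so that $1>\lambda_0(c)>\lambda_1(c)>\cdots>0$, of the compact self-adjoint operator on $L^2([-1,1])$ $$F_c\psi(x)=\int_{-1}^1\frac{\sin c(x-y)}{\pi(x-y)}\,\psi(y)\,dy,$$ whose eigenfunctions are the prolate spheroidal wave functions $\psi_{n,c}$ (the bounded solutions of $((1-x^2)\psi')'+(\chi_n(c)-c^2x^2)\psi=0$ on $[-1,1]$ with eigenvalue $\chi_n(c)$ increasing in $n$). *)

From Stdlib Require Import Reals.
Open Scope R_scope.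

(* The sinc kernel  sin(c t) / (pi t), extended continuously by c/pi at t = 0. *)
Definition sinc_kernel (c t : R) : R :=
  if Req_EM_T t 0 then c / PI else sin (c * t) / (PI * t).

Definition is_eigenfunction (c mu : R) (psi : R -> R) : Prop :=
  (forall x, -1 <= x <= 1 -> continuity_pt psi x) /\
  (exists x, -1 <= x <= 1 /\ psi x <> 0) /\
  (forall x, -1 <= x <= 1 ->
     exists pr : Riemann_integrable (fun y => sinc_kernel c (x - y) * psi y) (-1) 1,
       RiemannInt pr = mu * psi x).

Definition is_eigenvalue (c mu : R) : Prop :=
  exists psi, is_eigenfunction c mu psi.

Definition prolate_eigenvalues (c : R) (lam : nat -> R) : Prop :=
  (forall n, 0 < lam n < 1) /\
  (forall n, lam (S n) < lam n) /\
  (forall n, is_eigenvalue c (lam n)) /\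
  (forall mu, mu <> 0 -> is_eigenvalue c mu -> exists n, lam n = mu).

From Stdlib Require Import Reals Factorial Lra Lia Classical IndefiniteDescription.
From Coquelicot Require Import Coquelicot.
Open Scope R_scope.

(* Expanding sin(c t) / (pi t) in Taylor series, the kernel of F_c on [-1, 1] (where |t| <= 2) is a
   polynomial of degree < n in t = x - y up to an error eps_n(c) = (c/pi) (2c)^n / (n+1)!.  Such a
   polynomial kernel annihilates every function orthogonal to 1, y, ..., y^(n-1), and some nonzero
   f = a_0 psi_0 + ... + a_n psi_n is orthogonal to them.  The psi_k are pairwise orthogonal (F_c is a
   uniform limit of the symmetric polynomial-kernel operators), so
     lambda_n ||f||^2 <= <F_c f, f> <= eps_n(c) ||f||_1^2 <= 2 eps_n(c) ||f||^2.
   Finally 2 eps_n(c) <= (2c)^(n+1) / (n+1)! <= exp (2 c e^delta - delta (n+1)) by comparing with one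
   term of the exponential series, which gives the claim with N = 0 and kappa = 2 e^delta / delta. *)

(* [sum_lt n f] is the sum of [f k] over [k < n]; unlike [sum_f_R0] it may be empty. *)
Fixpoint sum_lt (n : nat) (f : nat -> R) : R :=
  match n with O => 0 | S n => sum_lt n f + f n end.

Lemma sum_lt_ext n f g : (forall k, (k < n)%nat -> f k = g k) -> sum_lt n f = sum_lt n g.
Proof.
  induction n as [|n IH]; simpl; intros H; [reflexivity|].
  rewrite IH, H; auto with arith.
Qed.

Lemma sum_lt_0 n : sum_lt n (fun _ => 0) = 0.
Proof. induction n as [|n IH]; simpl; [|rewrite IH]; ring. Qed.

Lemma sum_lt_Sl n f : sum_lt (S n) f = f O + sum_lt n (fun k => f (S k)).
Proof. induction n as [|n IH]; simpl in *; [|rewrite IH]; ring. Qed.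

Lemma sum_f_R0_sum_lt f n : sum_f_R0 f n = sum_lt (S n) f.
Proof. induction n as [|n IH]; simpl in *; [|rewrite IH]; ring. Qed.

Lemma sum_lt_scal a n f : sum_lt n (fun k => a * f k) = a * sum_lt n f.
Proof. induction n as [|n IH]; simpl; [|rewrite IH]; ring. Qed.

Lemma sum_lt_plus n f g : sum_lt n (fun k => f k + g k) = sum_lt n f + sum_lt n g.
Proof. induction n as [|n IH]; simpl; [|rewrite IH]; ring. Qed.

Lemma sum_lt_le n f g : (forall k, (k < n)%nat -> f k <= g k) -> sum_lt n f <= sum_lt n g.
Proof.
  induction n as [|n IH]; simpl; intros H; [lra|].
  apply Rplus_le_compat; [apply IH|apply H]; auto with arith.
Qed.

Lemma sum_lt_nonneg n f : (forall k, (k < n)%nat -> 0 <= f k) -> 0 <= sum_lt n f.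
Proof. intros H. rewrite <- (sum_lt_0 n). apply sum_lt_le, H. Qed.

Lemma sum_lt_ge_term n f k : (k < n)%nat -> (forall l, (l < n)%nat -> 0 <= f l) ->
  f k <= sum_lt n f.
Proof.
  induction n as [|n IH]; simpl; intros Hk Hf; [lia|].
  assert (0 <= sum_lt n f) by (apply sum_lt_nonneg; auto with arith).
  destruct (Nat.eq_dec k n) as [->|Hne]; [lra|].
  assert (f k <= sum_lt n f) by (apply IH; [lia|auto with arith]).
  assert (0 <= f n) by auto with arith. lra.
Qed.

Lemma sum_lt_single n f k : (k < n)%nat -> (forall l, (l < n)%nat -> l <> k -> f l = 0) ->
  sum_lt n f = f k.
Proof.
  induction n as [|n IH]; simpl; intros Hk H; [lia|].
  destruct (Nat.eq_dec k n) as [->|Hne].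
  - rewrite (sum_lt_ext n f (fun _ => 0)), sum_lt_0; [ring|].
    intros l Hl; apply H; lia.
  - rewrite IH, (H n) by (try intros; try apply H; lia). ring.
Qed.

Lemma Derive_n_sin j :
  (forall z, Derive_n sin (2 * j) z = (-1) ^ j * sin z) /\
  (forall z, Derive_n sin (S (2 * j)) z = (-1) ^ j * cos z).
Proof.
  induction j as [|j [IHe IHo]].
  - split; intros z; simpl; [ring|].
    rewrite (is_derive_unique _ z (cos z)); [ring|]. auto_derive; auto; ring.
  - assert (Heven : forall z, Derive_n sin (2 * S j) z = (-1) ^ S j * sin z).
    { intros z. replace (2 * S j)%nat with (S (S (2 * j))) by lia. simpl Derive_n at 1.
      rewrite (Derive_ext _ _ _ IHo).
      apply is_derive_unique. auto_derive; auto. simpl; ring. }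
    split; [exact Heven|]. intros z. simpl Derive_n at 1.
    rewrite (Derive_ext _ _ _ Heven).
    apply is_derive_unique. auto_derive; auto. simpl; ring.
Qed.

Lemma Derive_n_sin_bound k z : Rabs (Derive_n sin k z) <= 1.
Proof.
  destruct (Nat.Even_or_Odd k) as [[j ->]|[j ->]].
  - rewrite (proj1 (Derive_n_sin j)), Rabs_mult, pow_1_abs, Rmult_1_l.
    apply Rabs_le, SIN_bound.
  - rewrite Nat.add_1_r, (proj2 (Derive_n_sin j)), Rabs_mult, pow_1_abs, Rmult_1_l.
    apply Rabs_le, COS_bound.
Qed.

Lemma ex_derive_n_sin k t : ex_derive_n sin k t.
Proof.
  destruct k as [|k]; [exact I|]. simpl.
  destruct (Nat.Even_or_Odd k) as [[j ->]|[j ->]].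
  - apply (ex_derive_ext (fun z => (-1) ^ j * sin z)).
    { intros z; symmetry; apply (proj1 (Derive_n_sin j)). }
    auto_derive; auto.
  - rewrite Nat.add_1_r.
    apply (ex_derive_ext (fun z => (-1) ^ j * cos z)).
    { intros z; symmetry; apply (proj2 (Derive_n_sin j)). }
    auto_derive; auto.
Qed.

Ltac field_nz := field; repeat split; first [apply PI_neq0 | apply INR_fact_neq_0 | lra].

Definition poly_kernel (m : nat) (w : nat -> R) (t : R) : R :=
  sum_lt m (fun j => w j * t ^ j).

(* Taylor coefficients of [sinc_kernel c t = c/PI * sin u / u] at [u = c t = 0] *)
Definition sinc_coef (c : R) (j : nat) : R :=
  c / PI * c ^ j * Derive_n sin (S j) 0 / INR (fact (S j)).

Definition sinc_taylor (m : nat) (c : R) : R -> R := poly_kernel m (sinc_coef c).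

(* Lagrange bound for the remainder of [sinc_taylor m c t] when [|t| <= 2], the diameter of [-1, 1] *)
Definition sinc_taylor_err (m : nat) (c : R) : R :=
  c / PI * (2 * c) ^ m / INR (fact (S m)).

Lemma sinc_coef_odd c i : sinc_coef c (2 * i + 1) = 0.
Proof.
  unfold sinc_coef. replace (S (2 * i + 1)) with (2 * S i)%nat by lia.
  rewrite (proj1 (Derive_n_sin (S i))), sin_0. unfold Rdiv; ring.
Qed.

Lemma sinc_taylor_even m c t : sinc_taylor m c (- t) = sinc_taylor m c t.
Proof.
  apply sum_lt_ext; intros j _.
  destruct (Nat.Even_or_Odd j) as [[i ->]|[i ->]].
  - rewrite !pow_mult. f_equal. f_equal. ring.
  - rewrite sinc_coef_odd. ring.
Qed.

Lemma sinc_kernel_even c t : sinc_kernel c (- t) = sinc_kernel c t.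
Proof.
  unfold sinc_kernel.
  destruct (Req_EM_T (- t) 0), (Req_EM_T t 0); try lra.
  replace (c * - t) with (- (c * t)) by ring. rewrite sin_neg.
  field_nz.
Qed.

Lemma sinc_taylor_err_nonneg m c : 0 <= c -> 0 <= sinc_taylor_err m c.
Proof.
  intros Hc. unfold sinc_taylor_err. pose proof PI_RGT_0. pose proof (INR_fact_lt_0 (S m)).
  apply Rdiv_le_0_compat; auto. apply Rmult_le_pos; [apply Rdiv_le_0_compat|apply pow_le]; lra.
Qed.

Lemma sinc_kernel_taylor_pos m c t : 0 <= c -> 0 < t <= 2 ->
  Rabs (sinc_kernel c t - sinc_taylor m c t) <= sinc_taylor_err m c.
Proof.
  intros Hc Ht. pose proof PI_RGT_0 as Hpi. pose proof (INR_fact_lt_0 (S m)) as Hf.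
  unfold sinc_kernel. destruct (Req_EM_T t 0) as [|_]; [lra|].
  destruct (Req_dec c 0) as [->|Hc0].
  { unfold sinc_taylor, poly_kernel, sinc_coef, sinc_taylor_err.
    rewrite (sum_lt_ext _ _ (fun _ => 0)), sum_lt_0.
    2: intros; unfold Rdiv; ring.
    rewrite Rmult_0_l, sin_0. unfold Rdiv. rewrite !Rmult_0_l, Rminus_0_r, Rabs_R0. lra. }
  set (u := c * t). assert (Hu : 0 < u) by (unfold u; nra).
  destruct (Taylor_Lagrange sin m 0 u Hu) as [z [_ Htaylor]].
  { intros; apply ex_derive_n_sin. }
  rewrite sum_f_R0_sum_lt, sum_lt_Sl, Rminus_0_r in Htaylor.
  replace (u ^ 0 / INR (fact 0) * Derive_n sin 0 0) with 0 in Htaylor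
    by (simpl; rewrite sin_0; ring).
  rewrite (sum_lt_ext _ _ (fun k => PI * t * (sinc_coef c k * t ^ k))) in Htaylor.
  2:{ intros k _. unfold sinc_coef, u. change ((c * t) ^ S k) with (c * t * (c * t) ^ k).
      rewrite Rpow_mult_distr. field_nz. }
  rewrite sum_lt_scal in Htaylor.
  fold (poly_kernel m (sinc_coef c) t) (sinc_taylor m c t) in Htaylor.
  change (u ^ S m) with (u * u ^ m) in Htaylor.
  replace (sin u / (PI * t) - sinc_taylor m c t)
    with (c / PI * (u ^ m / INR (fact (S m))) * Derive_n sin (S m) z)
    by (rewrite Htaylor; unfold u; field_nz).
  unfold sinc_taylor_err. rewrite Rabs_mult, Rabs_right.
  2:{ apply Rle_ge, Rmult_le_pos; [apply Rdiv_le_0_compat; lra|].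
      apply Rdiv_le_0_compat; [apply pow_le|]; lra. }
  assert (u ^ m <= (2 * c) ^ m) by (apply pow_incr; unfold u; nra).
  pose proof (Derive_n_sin_bound (S m) z).
  assert (0 <= c / PI * (u ^ m / INR (fact (S m)))).
  { apply Rmult_le_pos; apply Rdiv_le_0_compat; try apply pow_le; lra. }
  apply Rle_trans with (c / PI * (u ^ m / INR (fact (S m)))); [nra|].
  replace (c / PI * (2 * c) ^ m / INR (fact (S m)))
    with (c / PI * ((2 * c) ^ m / INR (fact (S m)))) by (unfold Rdiv; ring).
  apply Rmult_le_compat_l; [apply Rdiv_le_0_compat; lra|].
  apply Rmult_le_compat_r; [left; apply Rinv_0_lt_compat|]; lra.
Qed.

Lemma sinc_kernel_taylor m c t : 0 <= c -> Rabs t <= 2 ->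
  Rabs (sinc_kernel c t - sinc_taylor m c t) <= sinc_taylor_err m c.
Proof.
  intros Hc Ht. pose proof PI_RGT_0.
  destruct (Rtotal_order t 0) as [Hneg|[->|Hpos]].
  - rewrite <- sinc_kernel_even, <- sinc_taylor_even.
    apply sinc_kernel_taylor_pos; auto. rewrite Rabs_left in Ht; lra.
  - unfold sinc_kernel. destruct (Req_EM_T 0 0) as [_|]; [|lra].
    destruct m as [|m].
    + unfold sinc_taylor, poly_kernel, sinc_taylor_err. simpl.
      rewrite Rminus_0_r, Rabs_right; [lra|]. apply Rle_ge, Rdiv_le_0_compat; lra.
    + unfold sinc_taylor, poly_kernel. rewrite sum_lt_Sl.
      rewrite (sum_lt_ext _ _ (fun _ => 0)) by (intros; simpl; ring).
      rewrite sum_lt_0. unfold sinc_coef.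
      rewrite (proj2 (Derive_n_sin 0)), cos_0. simpl.
      replace (c / PI - (c / PI * 1 * (1 * 1) / 1 * 1 + 0)) with 0 by field_nz.
      rewrite Rabs_R0. apply sinc_taylor_err_nonneg; auto.
  - apply sinc_kernel_taylor_pos; auto. rewrite Rabs_right in Ht; lra.
Qed.

Lemma exp_pow a n : exp a ^ n = exp (INR n * a).
Proof.
  induction n as [|n IH]; simpl pow; [rewrite Rmult_0_l, exp_0; reflexivity|].
  rewrite IH, <- exp_plus, S_INR. f_equal; ring.
Qed.

Lemma pow_div_fact_le_exp x n : 0 <= x -> x ^ n / INR (fact n) <= exp x.
Proof.
  intros Hx. eapply Rle_trans; [|apply (exp_ge_taylor x n Hx)].
  rewrite sum_f_R0_sum_lt. simpl sum_lt.
  assert (0 <= sum_lt n (fun k => x ^ k / INR (fact k))); [|lra].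
  apply sum_lt_nonneg. intros k _. apply Rdiv_le_0_compat; [apply pow_le; lra|apply INR_fact_lt_0].
Qed.

(* The Taylor series of [exp] at [2 c e^delta] dominates its term of order [m + 1]. *)
Lemma sinc_taylor_err_le_exp delta m c : 0 <= c ->
  2 * sinc_taylor_err m c <= exp (2 * c * exp delta - delta * INR (S m)).
Proof.
  intros Hc. pose proof (INR_fact_lt_0 (S m)) as Hf.
  assert (Hpi : 1 < PI) by (pose proof PI2_1; lra).
  assert (H2c : 0 <= (2 * c) ^ S m / INR (fact (S m)))
    by (apply Rdiv_le_0_compat; [apply pow_le|]; lra).
  apply Rle_trans with ((2 * c) ^ S m / INR (fact (S m))).
  { unfold sinc_taylor_err. change ((2 * c) ^ S m) with (2 * c * (2 * c) ^ m).
    assert (0 <= (2 * c) ^ m / INR (fact (S m))) by (apply Rdiv_le_0_compat; [apply pow_le|]; lra).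
    replace (2 * (c / PI * (2 * c) ^ m / INR (fact (S m))))
      with (2 * c / PI * ((2 * c) ^ m / INR (fact (S m)))) by (field; split; lra).
    replace (2 * c * (2 * c) ^ m / INR (fact (S m)))
      with (2 * c * ((2 * c) ^ m / INR (fact (S m)))) by (field; lra).
    apply Rmult_le_compat_r; auto.
    apply Rmult_le_reg_r with PI; [lra|]. unfold Rdiv. rewrite Rmult_assoc, Rinv_l by lra. nra. }
  replace ((2 * c) ^ S m / INR (fact (S m)))
    with ((2 * c * exp delta) ^ S m / INR (fact (S m)) * exp (- delta) ^ S m).
  2:{ unfold Rdiv. rewrite Rmult_assoc, (Rmult_comm (/ _)), <- Rmult_assoc, <- Rpow_mult_distr.
      rewrite Rmult_assoc, <- exp_plus, Rplus_opp_r, exp_0, Rmult_1_r. reflexivity. }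
  rewrite exp_pow, Rminus_def, exp_plus.
  replace (INR (S m) * - delta) with (- (delta * INR (S m))) by ring.
  apply Rmult_le_compat_r; [left; apply exp_pos|].
  apply pow_div_fact_le_exp. pose proof (exp_pos delta). nra.
Qed.

Lemma sinc_taylor_err_vanishes c e : 0 <= c -> 0 < e -> exists m, sinc_taylor_err m c < e.
Proof.
  intros Hc He. destruct (INR_unbounded (2 * c * exp 1 - ln (2 * e))) as [m Hm].
  exists m. pose proof (sinc_taylor_err_le_exp 1 m c Hc) as Hle.
  assert (exp (2 * c * exp 1 - 1 * INR (S m)) < 2 * e); [|lra].
  rewrite <- (exp_ln (2 * e)) by lra. apply exp_increasing. rewrite S_INR. lra.
Qed.

Lemma le_0_of_le_sinc_taylor_err c a K : 0 <= c -> 0 <= K ->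
  (forall m, a <= K * sinc_taylor_err m c) -> a <= 0.
Proof.
  intros Hc HK Ha. apply Rnot_lt_le. intros Hpos.
  destruct (sinc_taylor_err_vanishes c (a / (K + 1)) Hc) as [m Hm].
  { apply Rdiv_lt_0_compat; lra. }
  specialize (Ha m). pose proof (sinc_taylor_err_nonneg m c Hc).
  assert (K * sinc_taylor_err m c <= K * (a / (K + 1))) by (apply Rmult_le_compat_l; lra).
  assert (K * (a / (K + 1)) < a); [|lra].
  apply Rmult_lt_reg_r with (K + 1); [lra|]. field_simplify; lra.
Qed.

Definition cont11 (f : R -> R) : Prop := forall x, -1 <= x <= 1 -> continuous f x.

Definition int11 (g : R -> R) : R := RInt g (-1) 1.

Ltac continuous_by_derive :=
  apply (ex_derive_continuous (K := R_AbsRing) (V := R_NormedModule)); auto_derive; auto.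

Lemma cont11_continuous f : (forall x, continuous f x) -> cont11 f.
Proof. intros H x _; apply H. Qed.

Lemma cont11_mult f g : cont11 f -> cont11 g -> cont11 (fun y => f y * g y).
Proof. intros Hf Hg x Hx. apply (continuous_mult f g); auto. Qed.

Lemma cont11_abs f : cont11 f -> cont11 (fun y => Rabs (f y)).
Proof. intros Hf x Hx. apply continuous_Rabs_comp, Hf, Hx. Qed.

Lemma continuous_sum_lt n (F : nat -> R -> R) x :
  (forall k, (k < n)%nat -> continuous (F k) x) -> continuous (fun y => sum_lt n (fun k => F k y)) x.
Proof.
  induction n as [|n IH]; simpl; intros H; [apply continuous_const|].
  apply (continuous_plus (fun y => sum_lt n (fun k => F k y)) (F n)); auto with arith.
Qed.

Lemma cont11_sum n a (h : nat -> R -> R) :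
  (forall k, (k < n)%nat -> cont11 (h k)) -> cont11 (fun y => sum_lt n (fun k => a k * h k y)).
Proof.
  intros H x Hx. apply continuous_sum_lt. intros k Hk.
  apply (continuous_mult (fun _ => a k) (h k)); [apply continuous_const|apply H; auto].
Qed.

Lemma cont11_pow_mult i f : cont11 f -> cont11 (fun y => y ^ i * f y).
Proof. intros Hf. apply cont11_mult; auto. apply cont11_continuous; intros; continuous_by_derive. Qed.

Lemma ex_RInt_cont11 f : cont11 f -> ex_RInt f (-1) 1.
Proof.
  intros Hf. apply (ex_RInt_continuous (V := R_CompleteNormedModule)).
  rewrite Rmin_left, Rmax_right by lra. exact Hf.
Qed.

Lemma int11_ext f g : (forall x, -1 <= x <= 1 -> f x = g x) -> int11 f = int11 g.
Proof.
  intros H. apply RInt_ext. rewrite Rmin_left, Rmax_right by lra. intros x Hx; apply H; lra.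
Qed.

Lemma int11_const a : int11 (fun _ => a) = 2 * a.
Proof. unfold int11. rewrite RInt_const. unfold scal; simpl; unfold mult; simpl. ring. Qed.

Lemma int11_scal k f : ex_RInt f (-1) 1 -> int11 (fun y => k * f y) = k * int11 f.
Proof. intros Hf. apply (RInt_scal f); auto. Qed.

Lemma int11_plus f g : ex_RInt f (-1) 1 -> ex_RInt g (-1) 1 ->
  int11 (fun y => f y + g y) = int11 f + int11 g.
Proof. intros Hf Hg. apply (RInt_plus f g); auto. Qed.

Lemma int11_minus f g : ex_RInt f (-1) 1 -> ex_RInt g (-1) 1 ->
  int11 (fun y => f y - g y) = int11 f - int11 g.
Proof. intros Hf Hg. apply (RInt_minus f g); auto. Qed.

Lemma is_RInt_sum n (F : nat -> R -> R) (v : nat -> R) :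
  (forall k, (k < n)%nat -> is_RInt (F k) (-1) 1 (v k)) ->
  is_RInt (fun y => sum_lt n (fun k => F k y)) (-1) 1 (sum_lt n v).
Proof.
  induction n as [|n IH]; simpl; intros H.
  - apply (is_RInt_ext (fun _ => zero)); [reflexivity|].
    replace 0 with (scal (1 - -1) (@zero R_NormedModule)) by (compute; ring).
    apply is_RInt_const.
  - apply (is_RInt_plus (fun y => sum_lt n (fun k => F k y)) (F n)).
    + apply IH. intros; apply H; auto with arith.
    + apply H; auto.
Qed.

Lemma int11_sum_mult n (a : nat -> R) (h : nat -> R -> R) g :
  (forall k, (k < n)%nat -> cont11 (h k)) -> cont11 g ->
  int11 (fun t => sum_lt n (fun k => a k * h k t) * g t)
  = sum_lt n (fun k => a k * int11 (fun t => h k t * g t)).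
Proof.
  intros Hh Hg. unfold int11. apply is_RInt_unique.
  apply (is_RInt_ext (fun t => sum_lt n (fun k => a k * (h k t * g t)))).
  { intros t _. rewrite Rmult_comm, <- sum_lt_scal. apply sum_lt_ext; intros; ring. }
  apply is_RInt_sum. intros k Hk.
  apply (is_RInt_scal (fun t => h k t * g t)), (RInt_correct (V := R_CompleteNormedModule)).
  apply ex_RInt_cont11, cont11_mult; auto.
Qed.

Lemma int11_abs_le g h : ex_RInt g (-1) 1 -> ex_RInt h (-1) 1 ->
  (forall x, -1 <= x <= 1 -> Rabs (g x) <= h x) -> Rabs (int11 g) <= int11 h.
Proof.
  intros Hg Hh H. unfold int11.
  apply (norm_RInt_le g h (-1) 1); [lra|exact H| |].
  - apply (RInt_correct (V := R_CompleteNormedModule) g _ _ Hg).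
  - apply (RInt_correct (V := R_CompleteNormedModule) h _ _ Hh).
Qed.

Lemma int11_nonneg g : ex_RInt g (-1) 1 -> (forall x, -1 <= x <= 1 -> 0 <= g x) -> 0 <= int11 g.
Proof. intros Hg H. apply RInt_ge_0; auto; [lra|]. intros x Hx; apply H; lra. Qed.

Lemma int11_abs_nonneg f : cont11 f -> 0 <= int11 (fun x => Rabs (f x)).
Proof. intros Hf. apply int11_nonneg; [apply ex_RInt_cont11, cont11_abs, Hf|intros; apply Rabs_pos]. Qed.

Lemma int11_mult_le g phi B : cont11 g -> cont11 phi ->
  (forall x, -1 <= x <= 1 -> Rabs (g x) <= B) ->
  Rabs (int11 (fun x => g x * phi x)) <= B * int11 (fun x => Rabs (phi x)).
Proof.
  intros Hg Hphi HB. rewrite <- int11_scal by apply ex_RInt_cont11, cont11_abs, Hphi.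
  apply int11_abs_le.
  - apply ex_RInt_cont11, cont11_mult; auto.
  - apply (ex_RInt_scal (fun x => Rabs (phi x))), ex_RInt_cont11, cont11_abs, Hphi.
  - intros x Hx. rewrite Rabs_mult. apply Rmult_le_compat_r; auto using Rabs_pos.
Qed.

(* F_c would be [conv11 (sinc_kernel c)]; it is only used below for polynomial kernels [K]. *)
Definition conv11 (K : R -> R) (psi : R -> R) (x : R) : R :=
  int11 (fun y => K (x - y) * psi y).

Lemma binomial_sum_lt x y j :
  (x - y) ^ j = sum_lt (S j) (fun i => Binomial.C j i * x ^ i * (- y) ^ (j - i)).
Proof. rewrite <- sum_f_R0_sum_lt, <- binomial. f_equal; ring. Qed.

Lemma conv11_pow j psi x : cont11 psi ->
  conv11 (fun t => t ^ j) psi x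
  = sum_lt (S j) (fun i => Binomial.C j i * int11 (fun y => (- y) ^ (j - i) * psi y) * x ^ i).
Proof.
  intros Hpsi. unfold conv11.
  rewrite (int11_ext _
    (fun y => sum_lt (S j) (fun i => Binomial.C j i * x ^ i * (- y) ^ (j - i)) * psi y))
    by (intros y _; rewrite binomial_sum_lt; reflexivity).
  rewrite int11_sum_mult; auto.
  - apply sum_lt_ext; intros; ring.
  - intros; apply cont11_continuous; intros; continuous_by_derive.
Qed.

Lemma int11_pow_shift j phi y : cont11 phi ->
  int11 (fun x => (x - y) ^ j * phi x)
  = sum_lt (S j) (fun i => Binomial.C j i * int11 (fun x => x ^ i * phi x) * (- y) ^ (j - i)).
Proof.
  intros Hphi.
  rewrite (int11_ext _
    (fun x => sum_lt (S j) (fun i => Binomial.C j i * (- y) ^ (j - i) * x ^ i) * phi x)).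
  - rewrite int11_sum_mult; auto.
    + apply sum_lt_ext; intros; ring.
    + intros; apply cont11_continuous; intros; continuous_by_derive.
  - intros x _. rewrite binomial_sum_lt. f_equal. apply sum_lt_ext; intros; ring.
Qed.

Lemma continuous_conv11_pow j psi x : cont11 psi -> continuous (conv11 (fun t => t ^ j) psi) x.
Proof.
  intros Hpsi. eapply continuous_ext; [intros; symmetry; apply conv11_pow, Hpsi|].
  apply continuous_sum_lt. intros i _. continuous_by_derive.
Qed.

Lemma continuous_int11_pow_shift j phi y : cont11 phi ->
  continuous (fun y => int11 (fun x => (x - y) ^ j * phi x)) y.
Proof.
  intros Hphi. eapply continuous_ext; [intros; symmetry; apply int11_pow_shift, Hphi|].
  apply continuous_sum_lt. intros i _. continuous_by_derive.
Qed.

Lemma conv11_poly_kernel m w psi x : cont11 psi ->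
  conv11 (poly_kernel m w) psi x = sum_lt m (fun j => w j * conv11 (fun t => t ^ j) psi x).
Proof.
  intros Hpsi. apply int11_sum_mult; auto.
  intros j _. apply cont11_continuous. intros y.
  apply (continuous_comp (fun y => x - y) (fun t => t ^ j)); continuous_by_derive.
Qed.

Lemma continuous_conv11_poly_kernel m w psi x : cont11 psi ->
  continuous (conv11 (poly_kernel m w) psi) x.
Proof.
  intros Hpsi. eapply continuous_ext; [intros; symmetry; apply conv11_poly_kernel, Hpsi|].
  apply continuous_sum_lt. intros j _.
  apply (continuous_mult (fun _ => w j)); [apply continuous_const|apply continuous_conv11_pow, Hpsi].
Qed.

Lemma conv11_poly_kernel_adjoint m w psi phi : cont11 psi -> cont11 phi ->
  int11 (fun x => conv11 (poly_kernel m w) psi x * phi x)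
  = int11 (fun y => conv11 (fun t => poly_kernel m w (- t)) phi y * psi y).
Proof.
  intros Hpsi Hphi.
  rewrite (int11_ext _ (fun x => sum_lt m (fun j => w j * conv11 (fun t => t ^ j) psi x) * phi x))
    by (intros; rewrite conv11_poly_kernel; auto).
  rewrite (int11_ext (fun y => _ * psi y)
    (fun y => sum_lt m (fun j => w j * int11 (fun x => (x - y) ^ j * phi x)) * psi y)).
  2:{ intros y _. f_equal. unfold conv11, poly_kernel.
      rewrite (int11_ext _ (fun x => sum_lt m (fun j => w j * (x - y) ^ j) * phi x))
        by (intros x _; replace (- (y - x)) with (x - y) by ring; reflexivity).
      apply int11_sum_mult; auto. intros; apply cont11_continuous; intros; continuous_by_derive. }
  rewrite !int11_sum_mult; auto.
  2: intros; apply cont11_continuous; intros; apply continuous_int11_pow_shift, Hphi.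
  2: intros; apply cont11_continuous; intros; apply continuous_conv11_pow, Hpsi.
  apply sum_lt_ext. intros j _. f_equal.
  rewrite (int11_ext _ (fun x => sum_lt (S j) (fun i =>
              Binomial.C j i * int11 (fun y => (- y) ^ (j - i) * psi y) * x ^ i) * phi x))
    by (intros; rewrite conv11_pow; auto).
  rewrite (int11_ext (fun y => _ * psi y) (fun y => sum_lt (S j) (fun i =>
              Binomial.C j i * int11 (fun x => x ^ i * phi x) * (- y) ^ (j - i)) * psi y))
    by (intros; rewrite int11_pow_shift; auto).
  rewrite !int11_sum_mult; auto; try (intros; apply cont11_continuous; intros; continuous_by_derive).
  apply sum_lt_ext; intros; ring.
Qed.

Lemma conv11_poly_kernel_moments m w f x : cont11 f ->
  (forall i, (i < m)%nat -> int11 (fun y => y ^ i * f y) = 0) ->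
  conv11 (poly_kernel m w) f x = 0.
Proof.
  intros Hf Hmom. rewrite conv11_poly_kernel, <- (sum_lt_0 m) by auto.
  apply sum_lt_ext. intros j Hj.
  rewrite conv11_pow, <- (Rmult_0_r (w j)), <- (sum_lt_0 (S j)) by auto. f_equal.
  apply sum_lt_ext. intros i Hi.
  rewrite (int11_ext _ (fun y => (-1) ^ (j - i) * (y ^ (j - i) * f y))).
  - rewrite int11_scal, Hmom by (lia || apply ex_RInt_cont11, cont11_pow_mult, Hf). ring.
  - intros y _. replace (- y) with (-1 * y) by ring. rewrite Rpow_mult_distr. ring.
Qed.

Lemma conv11_sinc_taylor_symmetric m c psi phi : cont11 psi -> cont11 phi ->
  int11 (fun x => conv11 (sinc_taylor m c) psi x * phi x)
  = int11 (fun x => conv11 (sinc_taylor m c) phi x * psi x).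
Proof.
  intros Hpsi Hphi. unfold sinc_taylor. rewrite conv11_poly_kernel_adjoint by auto.
  apply int11_ext; intros y _. f_equal. apply int11_ext; intros x _. f_equal.
  apply (sinc_taylor_even m c (y - x)).
Qed.

Lemma sinc_taylor_defect c m f x v : 0 <= c -> cont11 f -> -1 <= x <= 1 ->
  is_RInt (fun y => sinc_kernel c (x - y) * f y) (-1) 1 v ->
  Rabs (v - conv11 (sinc_taylor m c) f x) <= sinc_taylor_err m c * int11 (fun y => Rabs (f y)).
Proof.
  intros Hc Hf Hx Hv.
  assert (Hpoly : cont11 (fun y => sinc_taylor m c (x - y) * f y)).
  { apply cont11_mult; auto. apply cont11_continuous; intros y.
    apply (continuous_comp (fun y => x - y) (sinc_taylor m c)); [continuous_by_derive|].
    apply (continuous_sum_lt m (fun j t => sinc_coef c j * t ^ j)). intros; continuous_by_derive. }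
  replace v with (int11 (fun y => sinc_kernel c (x - y) * f y)) by (apply is_RInt_unique, Hv).
  unfold conv11. rewrite <- int11_minus, <- int11_scal.
  - apply int11_abs_le.
    + apply (ex_RInt_minus (V := R_NormedModule)); [exists v; exact Hv|apply ex_RInt_cont11, Hpoly].
    + apply (ex_RInt_scal (fun y => Rabs (f y))), ex_RInt_cont11, cont11_abs, Hf.
    + intros y Hy. rewrite <- Rmult_minus_distr_r, Rabs_mult.
      apply Rmult_le_compat_r; [apply Rabs_pos|].
      apply sinc_kernel_taylor; auto. apply Rabs_le; lra.
  - apply ex_RInt_cont11, cont11_abs, Hf.
  - exists v; exact Hv.
  - apply ex_RInt_cont11, Hpoly.
Qed.

Lemma eigenfunction_cont11 c mu psi : is_eigenfunction c mu psi -> cont11 psi.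
Proof. intros [Hcont _] x Hx. apply continuity_pt_filterlim, Hcont, Hx. Qed.

Lemma eigenfunction_is_RInt c mu psi x : is_eigenfunction c mu psi -> -1 <= x <= 1 ->
  is_RInt (fun y => sinc_kernel c (x - y) * psi y) (-1) 1 (mu * psi x).
Proof.
  intros [_ [_ Heq]] Hx. destruct (Heq x Hx) as [pr Hpr].
  rewrite <- Hpr, <- RInt_Reals. apply (RInt_correct (V := R_CompleteNormedModule)).
  apply ex_RInt_Reals_1, pr.
Qed.

Lemma eigenfunction_taylor_defect c m mu psi phi : 0 <= c ->
  is_eigenfunction c mu psi -> cont11 phi ->
  Rabs (mu * int11 (fun x => psi x * phi x) - int11 (fun x => conv11 (sinc_taylor m c) psi x * phi x))
  <= sinc_taylor_err m c * int11 (fun y => Rabs (psi y)) * int11 (fun x => Rabs (phi x)).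
Proof.
  intros Hc Hpsi Hphi. pose proof (eigenfunction_cont11 _ _ _ Hpsi) as Hcpsi.
  assert (Hconv : cont11 (conv11 (sinc_taylor m c) psi))
    by (intros x _; apply continuous_conv11_poly_kernel, Hcpsi).
  rewrite <- int11_scal, <- int11_minus.
  - rewrite (int11_ext _ (fun x => (mu * psi x - conv11 (sinc_taylor m c) psi x) * phi x))
      by (intros; ring).
    apply int11_mult_le; auto.
    + intros x Hx. apply (continuous_minus (fun x => mu * psi x) (conv11 (sinc_taylor m c) psi)); auto.
      apply (continuous_mult (fun _ => mu) psi); [apply continuous_const|apply Hcpsi, Hx].
    + intros x Hx. apply sinc_taylor_defect; auto. apply eigenfunction_is_RInt; auto.
  - apply (ex_RInt_scal (fun x => psi x * phi x)), ex_RInt_cont11, cont11_mult; auto.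
  - apply ex_RInt_cont11, cont11_mult; auto.
  - apply ex_RInt_cont11, cont11_mult; auto.
Qed.

(* F_c is the uniform limit of the symmetric operators with kernels [sinc_taylor m c]. *)
Lemma eigenfunctions_orthogonal c mu1 mu2 phi psi : 0 <= c ->
  is_eigenfunction c mu1 phi -> is_eigenfunction c mu2 psi -> mu1 <> mu2 ->
  int11 (fun x => phi x * psi x) = 0.
Proof.
  intros Hc Hphi Hpsi Hne.
  pose proof (eigenfunction_cont11 _ _ _ Hphi) as Cphi.
  pose proof (eigenfunction_cont11 _ _ _ Hpsi) as Cpsi.
  set (I := int11 (fun x => phi x * psi x)).
  pose proof (int11_abs_nonneg phi Cphi) as HA. pose proof (int11_abs_nonneg psi Cpsi) as HB.
  set (A := int11 (fun x => Rabs (phi x))) in *. set (B := int11 (fun x => Rabs (psi x))) in *.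
  assert (Hbound : Rabs ((mu1 - mu2) * I) <= 0).
  { apply (le_0_of_le_sinc_taylor_err c _ (2 * A * B)); [auto|nra|]. intros m.
    pose proof (eigenfunction_taylor_defect c m mu1 phi psi Hc Hphi Cpsi) as D1.
    pose proof (eigenfunction_taylor_defect c m mu2 psi phi Hc Hpsi Cphi) as D2.
    rewrite conv11_sinc_taylor_symmetric in D2 by auto.
    rewrite (int11_ext (fun x => psi x * phi x) (fun x => phi x * psi x)) in D2 by (intros; ring).
    fold I A B in D1, D2.
    set (J := int11 (fun x => conv11 (sinc_taylor m c) phi x * psi x)) in D1, D2.
    replace ((mu1 - mu2) * I) with ((mu1 * I - J) - (mu2 * I - J)) by ring.
    eapply Rle_trans; [apply Rabs_triang|]. rewrite Rabs_Ropp. lra. }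
  pose proof (Rabs_pos ((mu1 - mu2) * I)) as Hpos.
  assert (Hz : (mu1 - mu2) * I = 0) by (apply Rabs_eq_0; lra).
  apply Rmult_integral in Hz as [Hz|Hz]; [lra|exact Hz].
Qed.

Lemma int11_sq_pos psi x0 : cont11 psi -> -1 <= x0 <= 1 -> psi x0 <> 0 ->
  0 < int11 (fun x => psi x * psi x).
Proof.
  intros Hpsi Hx0 Hne. set (g := fun x => psi x * psi x).
  assert (Hg : cont11 g) by (apply cont11_mult; auto).
  assert (Hg0 : 0 < g x0) by (unfold g; nra).
  assert (Hgnn : forall x, 0 <= g x) by (intros; unfold g; nra).
  assert (Hcont : continuity_pt g x0) by (apply continuity_pt_filterlim, Hg, Hx0).
  destruct (Hcont (g x0 / 2) ltac:(lra)) as [d [Hd Hnear]].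
  (* [g > g x0 / 2] on [[p, q]], a nondegenerate interval around [x0] inside [[-1, 1]] *)
  set (p := Rmax (-1) (x0 - d / 2)). set (q := Rmin 1 (x0 + d / 2)).
  assert (Hp : -1 <= p /\ x0 - d / 2 <= p) by (split; [apply Rmax_l|apply Rmax_r]).
  assert (Hq : q <= 1 /\ q <= x0 + d / 2) by (split; [apply Rmin_l|apply Rmin_r]).
  assert (Hpq : p < q) by (unfold p, q, Rmax, Rmin; repeat destruct Rle_dec; lra).
  assert (Hex : forall a b, -1 <= a -> a <= b -> b <= 1 -> ex_RInt g a b).
  { intros a b Ha Hab Hb. apply (ex_RInt_continuous (V := R_CompleteNormedModule)).
    rewrite Rmin_left, Rmax_right by lra. intros z Hz; apply Hg; lra. }
  assert (Hsplit : int11 g = RInt g (-1) p + (RInt g p q + RInt g q 1)).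
  { pose proof (RInt_Chasles g (-1) p 1 ltac:(apply Hex; lra) ltac:(apply Hex; lra)) as E1.
    pose proof (RInt_Chasles g p q 1 ltac:(apply Hex; lra) ltac:(apply Hex; lra)) as E2.
    unfold int11. simpl in E1, E2. unfold plus in E1, E2; simpl in E1, E2. lra. }
  assert (0 <= RInt g (-1) p) by (apply RInt_ge_0; auto; [lra|apply Hex; lra]).
  assert (0 <= RInt g q 1) by (apply RInt_ge_0; auto; [lra|apply Hex; lra]).
  assert (0 < RInt g p q).
  { apply RInt_gt_0; auto; [|intros; apply Hg; lra].
    intros x Hx. destruct (Req_dec x x0) as [->|Hx0ne]; [lra|].
    assert (Hclose : Rabs (g x - g x0) < g x0 / 2).
    { apply Hnear. split; [split; [exact I|auto]|]. simpl. unfold R_dist. apply Rabs_def1; lra. }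
    apply Rabs_def2 in Hclose. lra. }
  fold g. lra.
Qed.

Lemma int11_abs_sq_le f : cont11 f ->
  int11 (fun y => Rabs (f y)) ^ 2 <= 2 * int11 (fun y => f y * f y).
Proof.
  intros Hf. set (A := int11 (fun y => Rabs (f y))).
  assert (Hex_sq : ex_RInt (fun y => f y * f y) (-1) 1) by (apply ex_RInt_cont11, cont11_mult; auto).
  assert (Hex_abs : ex_RInt (fun y => Rabs (f y)) (-1) 1) by (apply ex_RInt_cont11, cont11_abs; auto).
  (* expand [0 <= int11 (|f| - A/2)^2] *)
  assert (H0 : 0 <= int11 (fun y => (f y * f y + (- A) * Rabs (f y)) + A ^ 2 / 4)).
  { apply int11_nonneg.
    - apply (ex_RInt_plus (V := R_NormedModule)); [|apply ex_RInt_const].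
      apply (ex_RInt_plus (V := R_NormedModule)); auto.
      apply (ex_RInt_scal (fun y => Rabs (f y))); auto.
    - intros y _. replace (f y * f y) with (Rabs (f y) * Rabs (f y)).
      + pose proof (pow2_ge_0 (Rabs (f y) - A / 2)). nra.
      + rewrite <- Rabs_mult. apply Rabs_right. pose proof (Rle_0_sqr (f y)). unfold Rsqr in *. lra. }
  rewrite int11_plus, int11_plus, int11_scal, int11_const in H0; auto.
  - fold A in H0. lra.
  - apply (ex_RInt_scal (fun y => Rabs (f y))); auto.
  - apply (ex_RInt_plus (V := R_NormedModule)); auto. apply (ex_RInt_scal (fun y => Rabs (f y))); auto.
  - apply ex_RInt_const.
Qed.

Lemma int11_orthogonal_sum n (psi : nat -> R -> R) (a b : nat -> R) :
  (forall k, (k < n)%nat -> cont11 (psi k)) ->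
  (forall k l, k <> l -> int11 (fun x => psi k x * psi l x) = 0) ->
  int11 (fun x => sum_lt n (fun k => a k * psi k x) * sum_lt n (fun k => b k * psi k x))
  = sum_lt n (fun k => a k * b k * int11 (fun x => psi k x * psi k x)).
Proof.
  intros Hpsi Horth. rewrite int11_sum_mult; auto using cont11_sum.
  apply sum_lt_ext. intros k Hk. rewrite Rmult_assoc. f_equal.
  rewrite (int11_ext _ (fun x => sum_lt n (fun l => b l * psi l x) * psi k x)) by (intros; ring).
  rewrite int11_sum_mult; auto.
  rewrite (sum_lt_single n _ k Hk); [reflexivity|].
  intros l _ Hlk. rewrite Horth; auto. ring.
Qed.

(* The Taylor part of the kernel annihilates [f], and the rest is at most [sinc_taylor_err n c]. *)
Lemma rayleigh_le_sinc_taylor_err c n f G : 0 <= c -> cont11 f -> cont11 G ->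
  (forall x, -1 <= x <= 1 -> is_RInt (fun y => sinc_kernel c (x - y) * f y) (-1) 1 (G x)) ->
  (forall i, (i < n)%nat -> int11 (fun y => y ^ i * f y) = 0) ->
  int11 (fun x => G x * f x) <= 2 * sinc_taylor_err n c * int11 (fun x => f x * f x).
Proof.
  intros Hc Hf HG HFf Hmom. set (A := int11 (fun y => Rabs (f y))).
  assert (HGx : forall x, -1 <= x <= 1 -> Rabs (G x) <= sinc_taylor_err n c * A).
  { intros x Hx. pose proof (sinc_taylor_defect c n f x (G x) Hc Hf Hx (HFf x Hx)) as Hdef.
    unfold sinc_taylor in Hdef. rewrite conv11_poly_kernel_moments, Rminus_0_r in Hdef; auto. }
  pose proof (int11_mult_le G f _ HG Hf HGx) as Hle. fold A in Hle.
  pose proof (int11_abs_sq_le f Hf) as Hsq. fold A in Hsq.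
  pose proof (sinc_taylor_err_nonneg n c Hc).
  apply Rle_trans with (sinc_taylor_err n c * A * A); [eapply Rle_trans; [apply Rle_abs|exact Hle]|].
  simpl in Hsq. nra.
Qed.

Lemma homogeneous_system_nontrivial_solution N m (g : nat -> nat -> R) : (m < N)%nat ->
  exists a : nat -> R, (exists k, (k < N)%nat /\ a k <> 0) /\
    forall j, (j < m)%nat -> sum_lt N (fun k => a k * g j k) = 0.
Proof.
  revert m g. induction N as [|N IH]; intros m g Hm; [lia|].
  destruct (classic (exists j0, (j0 < m)%nat /\ g j0 N <> 0)) as [[j0 [Hj0 Hpiv]]|Hzero].
  - (* Gaussian elimination of the unknown [N] with the pivot equation [j0] *)
    destruct m as [|m]; [lia|].
    set (skip := fun i => if Nat.ltb i j0 then i else S i).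
    set (h := fun i k => g (skip i) k - g (skip i) N / g j0 N * g j0 k).
    destruct (IH m h ltac:(lia)) as [b [[k0 [Hk0 Hbk0]] Hb]].
    set (Bj0 := sum_lt N (fun k => b k * g j0 k)).
    exists (fun k => if Nat.ltb k N then b k else - Bj0 / g j0 N). split.
    + exists k0. split; [lia|]. destruct (Nat.ltb_spec k0 N); [exact Hbk0|lia].
    + intros j Hj. simpl sum_lt. destruct (Nat.ltb_spec N N) as [|_]; [lia|].
      rewrite (sum_lt_ext _ _ (fun k => b k * g j k))
        by (intros k Hk; destruct (Nat.ltb_spec k N); [reflexivity|lia]).
      destruct (Nat.eq_dec j j0) as [->|Hjj0]; [fold Bj0; field; exact Hpiv|].
      set (i := if Nat.ltb j j0 then j else pred j).
      assert (Hi : (i < m)%nat /\ skip i = j).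
      { unfold i, skip. destruct (Nat.ltb_spec j j0).
        - destruct (Nat.ltb_spec j j0); [split; lia|lia].
        - destruct (Nat.ltb_spec (pred j) j0); [lia|split; lia]. }
      destruct Hi as [Hi Hskip]. specialize (Hb i Hi). unfold h in Hb. rewrite Hskip in Hb.
      rewrite (sum_lt_ext _ _ (fun k => b k * g j k + - (g j N / g j0 N) * (b k * g j0 k))) in Hb
        by (intros; ring).
      rewrite sum_lt_plus, sum_lt_scal in Hb. fold Bj0 in Hb.
      rewrite <- Hb. field. exact Hpiv.
  - exists (fun k => if Nat.eqb k N then 1 else 0). split.
    + exists N. rewrite Nat.eqb_refl. split; [lia|lra].
    + intros j Hj. simpl sum_lt. rewrite Nat.eqb_refl.
      rewrite (sum_lt_ext _ _ (fun _ => 0)), sum_lt_0.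
      * assert (Hg0 : g j N = 0) by (apply NNPP; intros Hne; apply Hzero; exists j; auto).
        rewrite Hg0; ring.
      * intros k Hk. destruct (Nat.eqb_spec k N); [lia|ring].
Qed.

Lemma strict_decreasing_lt (lam : nat -> R) : (forall n, lam (S n) < lam n) ->
  forall k n, (k < n)%nat -> lam n < lam k.
Proof.
  intros Hdec k n Hkn. induction Hkn as [|n Hkn IH]; [apply Hdec|].
  specialize (Hdec n). lra.
Qed.

Lemma moment_free_combination n (psi : nat -> R -> R) : (forall k, cont11 (psi k)) ->
  exists a : nat -> R, (exists k0, (k0 < S n)%nat /\ a k0 <> 0) /\
    forall j, (j < n)%nat -> int11 (fun y => y ^ j * sum_lt (S n) (fun k => a k * psi k y)) = 0.
Proof.
  intros Cpsi.
  destruct (homogeneous_system_nontrivial_solution (S n) n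
              (fun j k => int11 (fun y => y ^ j * psi k y)) (Nat.lt_succ_diag_r n))
    as [a [Ha0 Ha]].
  exists a. split; [exact Ha0|]. intros j Hj. rewrite <- (Ha j Hj).
  rewrite (int11_ext _ (fun y => sum_lt (S n) (fun k => a k * psi k y) * y ^ j)) by (intros; ring).
  rewrite int11_sum_mult; auto.
  - apply sum_lt_ext; intros k _. f_equal. apply int11_ext; intros; ring.
  - apply cont11_continuous; intros; continuous_by_derive.
Qed.

Lemma is_RInt_sinc_eigen_combination c n (mu a : nat -> R) (psi : nat -> R -> R) x :
  (forall k, is_eigenfunction c (mu k) (psi k)) -> -1 <= x <= 1 ->
  is_RInt (fun y => sinc_kernel c (x - y) * sum_lt n (fun k => a k * psi k y)) (-1) 1
    (sum_lt n (fun k => (a k * mu k) * psi k x)).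
Proof.
  intros Hpsi Hx.
  apply (is_RInt_ext (fun y => sum_lt n (fun k => a k * (sinc_kernel c (x - y) * psi k y)))).
  { intros y _. rewrite <- sum_lt_scal. apply sum_lt_ext; intros; ring. }
  apply is_RInt_sum. intros k _. rewrite Rmult_assoc.
  apply (is_RInt_scal (fun y => sinc_kernel c (x - y) * psi k y)), eigenfunction_is_RInt; auto.
Qed.

Lemma orthogonal_combination_rayleigh_ge n lo (mu a : nat -> R) (psi : nat -> R -> R) :
  (forall k, (k < n)%nat -> cont11 (psi k)) ->
  (forall k l, k <> l -> int11 (fun x => psi k x * psi l x) = 0) ->
  (forall k, (k < n)%nat -> lo <= mu k) ->
  lo * int11 (fun x => sum_lt n (fun k => a k * psi k x) * sum_lt n (fun k => a k * psi k x))
  <= int11 (fun x => sum_lt n (fun k => (a k * mu k) * psi k x) * sum_lt n (fun k => a k * psi k x)).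
Proof.
  intros Cpsi Horth Hlo. rewrite !int11_orthogonal_sum, <- sum_lt_scal by auto.
  apply sum_lt_le. intros k Hk. cbv beta.
  assert (0 <= int11 (fun x => psi k x * psi k x)).
  { apply int11_nonneg; [apply ex_RInt_cont11, cont11_mult; auto|intros; nra]. }
  assert (0 <= a k * a k * int11 (fun x => psi k x * psi k x)) by (apply Rmult_le_pos; nra).
  specialize (Hlo k Hk). nra.
Qed.

Lemma orthogonal_combination_norm_pos n k0 (a : nat -> R) (psi : nat -> R -> R) :
  (forall k, (k < n)%nat -> cont11 (psi k)) ->
  (forall k l, k <> l -> int11 (fun x => psi k x * psi l x) = 0) ->
  (forall k, (k < n)%nat -> 0 < int11 (fun x => psi k x * psi k x)) ->
  (k0 < n)%nat -> a k0 <> 0 ->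
  0 < int11 (fun x => sum_lt n (fun k => a k * psi k x) * sum_lt n (fun k => a k * psi k x)).
Proof.
  intros Cpsi Horth Hnorm Hk0 Hak0. rewrite int11_orthogonal_sum by auto.
  apply Rlt_le_trans with (a k0 * a k0 * int11 (fun x => psi k0 x * psi k0 x)).
  - apply Rmult_lt_0_compat; [apply (Rsqr_pos_lt _ Hak0)|auto].
  - apply (sum_lt_ge_term _ (fun k => a k * a k * int11 (fun x => psi k x * psi k x))); auto.
    intros l Hl. specialize (Hnorm l Hl). nra.
Qed.

(* The first [n + 1] eigenfunctions span a function orthogonal to the polynomials of degree [< n],
   and on that span the Rayleigh quotient of F_c is at least [lam n]. *)
Lemma prolate_eigenvalue_le_sinc_taylor_err c lam n : 0 <= c -> prolate_eigenvalues c lam ->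
  lam n <= 2 * sinc_taylor_err n c.
Proof.
  intros Hc [_ [Hdec [Heig _]]].
  destruct (functional_choice (fun k psi => is_eigenfunction c (lam k) psi) Heig) as [psi Hpsi].
  assert (Cpsi : forall k, cont11 (psi k)) by (intros; eapply eigenfunction_cont11, Hpsi).
  assert (Horth : forall k l, k <> l -> int11 (fun x => psi k x * psi l x) = 0).
  { intros k l Hkl. apply (eigenfunctions_orthogonal c (lam k) (lam l)); auto.
    destruct (Nat.lt_gt_cases k l) as [[Hlt|Hlt] _]; auto;
      apply (strict_decreasing_lt lam Hdec) in Hlt; lra. }
  assert (Hnorm : forall k, (k < S n)%nat -> 0 < int11 (fun x => psi k x * psi k x)).
  { intros k _. destruct (Hpsi k) as [_ [[x0 [Hx0 Hne]] _]]. apply (int11_sq_pos (psi k) x0); auto. }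
  assert (Hlo : forall k, (k < S n)%nat -> lam n <= lam k).
  { intros k Hk. destruct (Nat.eq_dec k n) as [->|]; [lra|].
    left; apply (strict_decreasing_lt lam Hdec); lia. }
  destruct (moment_free_combination n psi Cpsi) as [a [[k0 [Hk0 Hak0]] Hmom]].
  pose proof (orthogonal_combination_norm_pos (S n) k0 a psi (fun k _ => Cpsi k) Horth Hnorm Hk0 Hak0).
  pose proof (orthogonal_combination_rayleigh_ge (S n) (lam n) lam a psi (fun k _ => Cpsi k)
                Horth Hlo).
  pose proof (rayleigh_le_sinc_taylor_err c n _ _ Hc (cont11_sum _ _ _ (fun k _ => Cpsi k))
                (cont11_sum _ _ _ (fun k _ => Cpsi k))
                (fun x Hx => is_RInt_sinc_eigen_combination c (S n) lam a psi x Hpsi Hx) Hmom).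
  apply Rmult_le_reg_r with
    (int11 (fun x => sum_lt (S n) (fun k => a k * psi k x) * sum_lt (S n) (fun k => a k * psi k x)));
    lra.
Qed.

Theorem theorem3 (delta : R) (hdelta : 0 < delta) :
  exists (N : nat) (kappa : R), 0 < kappa /\
    forall (c : R) (lam : nat -> R), 0 <= c -> prolate_eigenvalues c lam ->
      forall n : nat, (N <= n)%nat -> kappa * c <= INR n ->
        lam n <= exp (- delta * (INR n - kappa * c)).
Proof.
  exists 0%nat, (2 * exp delta / delta). split.
  { apply Rdiv_lt_0_compat; [pose proof (exp_pos delta)|]; lra. }
  intros c lam Hc Hlam n _ _.
  eapply Rle_trans; [apply prolate_eigenvalue_le_sinc_taylor_err; eauto|].
  eapply Rle_trans; [apply (sinc_taylor_err_le_exp delta n c Hc)|].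
  left. apply exp_increasing. rewrite S_INR.
  replace (- delta * (INR n - 2 * exp delta / delta * c)) with (2 * c * exp delta - delta * INR n)
    by (field; lra).
  lra.
Qed.
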